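(* Let $n\ge 1$ and let $A=[a_{ij}]\in\{0,1\}^{2n\times 2n}$ be symmetric with zero diagonal, with row sums $r_i=\sum_j a_{ij}$. Then for each $i\in\{1,\dots,2n\}$, $$(\mathrm{hafn}\, A)^{\mathrm{hafn}\, A}\le r_i^{\mathrm{hafn}\, A}\prod_{j:\, a_{ij}=1}\big(\mathrm{hafn}\, A(i,j)\big)^{\mathrm{hafn}\, A(i,j)},$$ with the convention $0^0=1$.
   Context: For a real symmetric $2n\times 2n$ matrix $A=[a_{ij}]$, the hafnian is $\mathrm{hafn}\, A=\sum \prod_{k=1}^n a_{i_kj_k}$, where the sum runs over all partitions $\{\{i_1,j_1\},\dots,\{i_n,j_n\}\}$ of $\{1,\dots,2n\}$ into $n$ pairs (with $i_k<j_k$); the hafnian of the empty $0\times0$ matrix is $1$. $A(i,j)$ is the matrix obtained from $A$ by deleting rows $i,j$ and columns $i,j$. *)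

From HB Require Import structures.
From mathcomp Require Import all_boot all_order all_algebra all_fingroup.
Set Implicit Arguments. Unset Strict Implicit. Unset Printing Implicit Defensive.

(* A perfect matching of the index set S (a subset of 'I_m) is encoded as a
   permutation s of 'I_m that fixes every point outside S and is a
   fixed-point-free involution on S; its pairs are {x, s x} for x in S.
   This is a bijection between partitions of S into pairs and such s. *)
Definition pmatching (m : nat) (S : {set 'I_m}) (s : {perm 'I_m}) : bool :=
  [forall x, if x \in S then (s x != x) && (s (s x) == x) else s x == x].

Definition hafn_on (m : nat) (A : 'M[nat]_m) (S : {set 'I_m}) : nat :=
  \sum_(s : {perm 'I_m} | pmatching S s) \prod_(x in S | x < s x) A x (s x).

Definition hafn (m : nat) (A : 'M[nat]_m) : nat := hafn_on A setT.

(* hafn A(i,j): hafnian of the matrix obtained by deleting rows and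
   columns i and j (indices kept in their original order). *)
Definition hafn_del (m : nat) (A : 'M[nat]_m) (i j : 'I_m) : nat :=
  hafn_on A (setT :\ i :\ j).

From HB Require Import structures.
From mathcomp Require Import all_boot all_order all_algebra all_fingroup.
Set Implicit Arguments. Unset Strict Implicit. Unset Printing Implicit Defensive.
Import Order.TTheory GRing.Theory Num.Theory.

(* Fix a row i and let N = {j | a_ij = 1}, so r_i = |N|.  Expanding the
   hafnian along row i (every perfect matching pairs i with some j) gives
   hafn A = sum_{j in N} hafn A(i,j).  The theorem is therefore the purely
   numerical inequality
       H^H <= |N|^H * prod_{j in N} h_j^h_j     where H = sum_{j in N} h_j,
   which is the weighted AM-GM inequality prod (1/h_j)^{h_j} <= (|N|/H)^H. *)

Section WeightedAGM.
Local Open Scope ring_scope.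
Variables (I : finType) (B : {pred I}) (w : I -> nat).

(* Each i in B is repeated w i times: the index set of the expanded family. *)
Let T := {i : I & 'I_(w i)}.
Let expanded : {pred T} := fun p => tag p \in B.

Lemma sum_expanded (V : nmodType) (F : I -> V) :
  \sum_(p in expanded) F (tag p) = \sum_(i in B) F i *+ w i.
Proof.
rewrite -(eq_bigl _ _ (fun p => andbT _)).
rewrite -(sig_big_dep _ (fun i (_ : 'I_(w i)) => true) (fun i _ => F i)) /=.
by apply: eq_bigr => i _; rewrite sumr_const card_ord.
Qed.

Lemma prod_expanded (R : comPzSemiRingType) (F : I -> R) :
  \prod_(p in expanded) F (tag p) = \prod_(i in B) F i ^+ w i.
Proof.
rewrite -(eq_bigl _ _ (fun p => andbT _)).
rewrite -(sig_big_dep _ (fun i (_ : 'I_(w i)) => true) (fun i _ => F i)) /=.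
by apply: eq_bigr => i _; rewrite prodr_const card_ord.
Qed.

Lemma card_expanded : #|expanded| = (\sum_(i in B) w i)%N.
Proof.
rewrite -sum1_card (sum_expanded (fun _ => 1%N)).
by apply: eq_bigr => i _; rewrite natn.
Qed.

(* Weighted AM-GM with natural weights w and total weight W, in the
   division-free form of leif_AGM_scaled. *)
Lemma weighted_AGM_scaled (R : numDomainType) (x : I -> R)
    (W := (\sum_(i in B) w i)%N) :
  {in B, forall i, 0 <= x i} ->
  \prod_(i in B) (x i *+ W) ^+ w i <= (\sum_(i in B) x i *+ w i) ^+ W.
Proof.
move=> x_ge0.
have prodE := prod_expanded (fun i => x i *+ W).
have /= := @leif_AGM_scaled R T expanded (fun p => x (tag p)).
rewrite card_expanded -/W prodE sum_expanded; case=> // p Bp.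
by rewrite mulrn_wge0 // x_ge0.
Qed.

(* The entropy bound H^H <= |B|^H * prod_i (w i)^(w i), where H = sum_i w i:
   weighted AM-GM applied to the reciprocals 1/(w i), after factoring
   H^H = prod_i (H/(w i))^(w i) * prod_i (w i)^(w i). *)
Lemma entropy_bound (H := (\sum_(i in B) w i)%N) :
  (H ^ H <= #|B| ^ H * \prod_(i in B) w i ^ w i)%N.
Proof.
pose x i : rat := (w i)%:R^-1.
have x_ge0 : {in B, forall i, 0 <= x i} by move=> i _; rewrite invr_ge0.
have sum_xw : \sum_(i in B) x i *+ w i <= #|B|%:R.
  rewrite -sum1_card natr_sum; apply: ler_sum => i _.
  rewrite -[x i *+ w i]mulr_natr /x.
  by case: (w i) => [|k]; rewrite ?mulr0 // mulVf ?pnatr_eq0.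
have splitH : H%:R ^+ H = \prod_(i in B) (x i *+ H) ^+ w i
                          * \prod_(i in B) (w i ^ w i)%:R :> rat.
  rewrite -big_split {2}/H -prodrXr; apply: eq_bigr => i _ /=.
  rewrite natrX -exprMn -[x i *+ H]mulr_natr mulrAC /x.
  by case: (w i) => [|k]; rewrite ?expr0 // mulVf ?mul1r ?pnatr_eq0.
rewrite -(ler_nat rat _ _) natrM natr_prod !natrX splitH.
apply: ler_wpM2r; first by apply: prodr_ge0 => i _; rewrite ler0n.
apply: (le_trans (weighted_AGM_scaled x_ge0)).
apply: lerXn2r sum_xw; rewrite nnegrE ?ler0n //.
by apply: sumr_ge0 => i Bi; rewrite mulrn_wge0 ?x_ge0.
Qed.

End WeightedAGM.

Lemma pmatchingP (m : nat) (S : {set 'I_m}) (s : {perm 'I_m}) :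
  reflect (involutive s /\ forall x, (s x == x) = (x \notin S)) (pmatching S s).
Proof.
apply: (iffP forallP) => [pmS | [s_inv fixS] x].
- split=> [x | x]; have := pmS x; case: (x \in S) => //=.
  + by case/andP=> _ /eqP.
  + by move/eqP=> sx; rewrite sx sx.
  + by case/andP=> /negbTE.
- have := fixS x; case: (x \in S) => /= [sxx | /eqP sxx]; last by rewrite sxx.
  by rewrite sxx s_inv eqxx.
Qed.

Lemma pmatching_out (m : nat) (S : {set 'I_m}) (s : {perm 'I_m}) (x : 'I_m) :
  pmatching S s -> x \notin S -> s x = x.
Proof. by case/pmatchingP=> _ fixS xS; apply/eqP; rewrite fixS. Qed.

Lemma pmatching_partner (m : nat) (S : {set 'I_m}) (s : {perm 'I_m}) (x : 'I_m) :
  pmatching S s -> x \in S -> s x \in S :\ x.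
Proof.
case/pmatchingP=> s_inv fixS Sx; rewrite in_setD1.
have sxx : s x != x by rewrite fixS Sx.
by rewrite sxx /=; apply: contraR sxx; rewrite -fixS s_inv eq_sym.
Qed.

Lemma perm_avoid (T : finType) (s : {perm T}) (x y : T) :
  s y = y -> x != y -> s x != y.
Proof. by move=> sy; apply: contra => /eqP e; rewrite -(perm_inj (etrans e (esym sy))). Qed.

(* Adding the pair {i, j} to a matching s of S \ {i, j} gives the matching
   tperm i j * s of S, and every matching of S pairing i with j arises so. *)
Section RemovePair.
Variables (m : nat) (S : {set 'I_m}) (i j : 'I_m).
Hypotheses (Si : i \in S) (Sj : j \in S) (nij : i != j).

Lemma in_setD2 x : (x \in S :\ i :\ j) = [&& x \in S, x != i & x != j].
Proof. by rewrite !in_setD1; case: (x \in S); case: (x != i); case: (x != j). Qed.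

Lemma notin_setD2 : (i \notin S :\ i :\ j) && (j \notin S :\ i :\ j).
Proof. by rewrite !in_setD2 !eqxx !andbF. Qed.

Lemma tperm_mul_out (s : {perm 'I_m}) x :
  x != i -> x != j -> (tperm i j * s)%g x = s x.
Proof. by move=> xi xj; rewrite permM tpermD // eq_sym. Qed.

Lemma pmatching_add_pair (s : {perm 'I_m}) :
  pmatching (S :\ i :\ j) s ->
  pmatching S (tperm i j * s) && ((tperm i j * s)%g i == j).
Proof.
move=> pm_s; have /andP[Ni Nj] := notin_setD2.
have [si sj] := (pmatching_out pm_s Ni, pmatching_out pm_s Nj).
case/pmatchingP: pm_s => s_inv fixS.
set u := (tperm i j * s)%g.
have ui : u i = j by rewrite /u permM tpermL sj.
have uj : u j = i by rewrite /u permM tpermR si.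
rewrite ui eqxx andbT; apply/pmatchingP; split=> x.
- have [->|xi] := eqVneq x i; first by rewrite ui uj.
  have [->|xj] := eqVneq x j; first by rewrite uj ui.
  rewrite [u x]tperm_mul_out // tperm_mul_out ?s_inv //; exact: perm_avoid.
- have [->|xi] := eqVneq x i; first by rewrite ui eq_sym (negbTE nij) Si.
  have [->|xj] := eqVneq x j; first by rewrite uj (negbTE nij) Sj.
  by rewrite tperm_mul_out // fixS in_setD2 xi xj !andbT.
Qed.

Lemma pmatching_remove_pair (s : {perm 'I_m}) :
  pmatching S (tperm i j * s) -> (tperm i j * s)%g i = j ->
  pmatching (S :\ i :\ j) s.
Proof.
set u := (tperm i j * s)%g => /pmatchingP[u_inv fixS] ui.
have uj : u j = i by rewrite -ui u_inv.
have si : s i = i by rewrite -[in RHS]uj /u permM tpermR.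
have sj : s j = j by rewrite -[in RHS]ui /u permM tpermL.
apply/pmatchingP; split=> x.
- have [->|xi] := eqVneq x i; first by rewrite !si.
  have [->|xj] := eqVneq x j; first by rewrite !sj.
  have uxi : u x != i by rewrite -uj (inj_eq perm_inj).
  have uxj : u x != j by rewrite -ui (inj_eq perm_inj).
  by rewrite -[s x](tperm_mul_out s xi xj) -tperm_mul_out // u_inv.
- rewrite in_setD2; have [->|xi] := eqVneq x i; first by rewrite si eqxx /= andbF.
  have [->|xj] := eqVneq x j; first by rewrite sj eqxx /= !andbF.
  by rewrite -tperm_mul_out // fixS /= !andbT.
Qed.

Lemma pair_factor (A : 'M[nat]_m) : A i j = A j i ->
  (if i < j then A i j else 1) * (if j < i then A j i else 1) = A i j.
Proof.
move=> Aij; case: ltngtP => [_|_|/val_inj eij]; rewrite ?muln1 ?mul1n //.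
by move: nij; rewrite eij eqxx.
Qed.

Lemma prod_add_pair (A : 'M[nat]_m) (s : {perm 'I_m}) :
  A i j = A j i -> pmatching (S :\ i :\ j) s ->
  \prod_(x in S | x < (tperm i j * s)%g x) A x ((tperm i j * s)%g x) =
  A i j * \prod_(x in S :\ i :\ j | x < s x) A x (s x).
Proof.
move=> Aij pm_s; have /andP[Ni Nj] := notin_setD2.
have [si sj] := (pmatching_out pm_s Ni, pmatching_out pm_s Nj).
rewrite big_mkcondr (bigD1 i) // (bigD1 j) /=; last by rewrite Sj eq_sym nij.
rewrite permM tpermL sj permM tpermR si mulnA pair_factor //; congr (_ * _).
rewrite [RHS]big_mkcondr; apply: eq_big => [x|x]; first by rewrite in_setD2 andbA.
by case/andP=> /andP[_ xi] xj; rewrite tperm_mul_out.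
Qed.

End RemovePair.

(* Row expansion of the hafnian of a symmetric matrix: classify the perfect
   matchings of S by the partner j of i. *)
Lemma hafn_on_expand (m : nat) (A : 'M[nat]_m) (S : {set 'I_m}) (i : 'I_m) :
  (forall x y, A x y = A y x) -> i \in S ->
  hafn_on A S = \sum_(j in S :\ i) A i j * hafn_on A (S :\ i :\ j).
Proof.
move=> Asym Si; rewrite /hafn_on.
rewrite (partition_big (fun s : {perm _} => s i) (fun j => j \in S :\ i)) /=; last first.
  by move=> s pm_s; apply: pmatching_partner.
apply: eq_bigr => j; rewrite in_setD1 => /andP[nji Sj].
have nij : i != j by rewrite eq_sym.
rewrite big_distrr (reindex_inj (mulgI (tperm i j))) /=.
apply: eq_big => s.
  apply/idP/idP => [/andP[pm_u /eqP ui] | pm_s].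
  - exact: pmatching_remove_pair pm_u ui.
  - exact: pmatching_add_pair.
case/andP=> pm_u /eqP ui.
by rewrite prod_add_pair ?(Asym i j) ?(pmatching_remove_pair pm_u ui).
Qed.

Lemma sum_indicator (I : finType) (P : pred I) (a f : I -> nat) :
  (forall j, a j <= 1) ->
  \sum_(j | P j) a j * f j = \sum_(j | P j && (a j == 1)) f j.
Proof.
move=> a01; rewrite (bigID (fun j => a j == 1)) /= [X in _ + X]big1 ?addn0.
  by apply: eq_bigr => j /andP[_ /eqP ->]; rewrite mul1n.
by move=> j /andP[_]; have := a01 j; case: (a j) => [|[|]].
Qed.

Theorem lemma3p1 (n : nat) (hn : 1 <= n) (A : 'M[nat]_(2 * n))
  (h01 : forall i j, A i j <= 1)
  (hsym : forall i j, A i j = A j i)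
  (hdiag : forall i, A i i = 0) :
  forall i : 'I_(2 * n),
    hafn A ^ hafn A <=
    (\sum_(j < 2 * n) A i j) ^ hafn A *
    \prod_(j < 2 * n | A i j == 1) hafn_del A i j ^ hafn_del A i j.
Proof.
move=> i; pose N := [pred j | A i j == 1].
have degree : \sum_(j < 2 * n) A i j = #|N|.
  under eq_bigr do rewrite -[A i _]muln1.
  by rewrite sum_indicator // -sum1_card.
have hafn_row : hafn A = \sum_(j in N) hafn_del A i j.
  rewrite /hafn (hafn_on_expand hsym (in_setT i)) sum_indicator //.
  apply: eq_bigl => j; rewrite in_setD1 in_setT andbT inE.
  by have [->|] := eqVneq j i; rewrite ?hdiag.
rewrite degree hafn_row.
exact: entropy_bound N (hafn_del A i).
Qed.
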